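(* Let $V$ be a finite-dimensional super vector space over a field of characteristic $0$. For a Dirac structure $L\subseteq\mathcal{E}=\mathfrak{gl}(V)\oplus V$, let $W_L=\{x\in V:\ A+x\in L\text{ for some }A\in\mathfrak{gl}(V)\}$ and define $[x,y]_L=A(y)$ for $x,y\in W_L$, where $A$ is any element with $A+x\in L$. Then $[\cdot,\cdot]_L$ is well defined, takes values in $W_L$, and makes $W_L$ a Lie superalgebra; moreover the assignment $L\mapsto(W_L,[\cdot,\cdot]_L)$ is a bijection between the set of Dirac structures of the omni-Lie superalgebra $(\mathcal{E},[\![\cdot,\cdot]\!],\langle\cdot,\cdot\rangle)$ and the set of pairs $(W,[\cdot,\cdot]_W)$ with $W$ a graded subspace of $V$ and $[\cdot,\cdot]_W$ a Lie superalgebra structure on $W$. The inverse sends $(W,[\cdot,\cdot]_W)$ to $\{A+x:\ x\in W,\ A\in\mathfrak{gl}(V),\ A(y)=[x,y]_W\ \forall y\in W\}$.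
   Context: $\mathfrak{gl}(V)$: linear endomorphisms of $V$ with natural $\mathbb{Z}_2$-grading and supercommutator $[A,B]=AB-(-1)^{|A||B|}BA$. $\mathcal{E}=\mathfrak{gl}(V)\oplus V$ graded by $\mathcal{E}_\alpha=\mathfrak{gl}(V)_\alpha\oplus V_\alpha$, homogeneous elements $A+x$ with $|A|=|x|$. Bracket: $[\![A+x,B+y]\!]=[A,B]+\tfrac12(Ay-(-1)^{|x||y|}Bx)$; $V$-valued pairing: $\langle A+x,B+y\rangle=\tfrac12(Ay+(-1)^{|x||y|}Bx)$. $F^\perp=\{e:\langle e,f\rangle=0\ \forall f\in F\}$. A Dirac structure is a graded subspace $L\subseteq\mathcal{E}$ with $L=L^\perp$ and $[\![L,L]\!]\subseteq L$. A Lie superalgebra is a super vector space with bilinear bracket satisfying $[L_\alpha,L_\beta]\subseteq L_{\alpha+\beta}$, $[x,y]=-(-1)^{|x||y|}[y,x]$, and $[x,[y,z]]=[[x,y],z]+(-1)^{|x||y|}[y,[x,z]]$. *)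

From HB Require Import structures.
From mathcomp Require Import all_boot all_order all_algebra.
Set Implicit Arguments. Unset Strict Implicit. Unset Printing Implicit Defensive.
Import GRing.Theory.
Local Open Scope ring_scope.

(* A finite-dimensional super vector space V over F is modelled (up to
   isomorphism) as column vectors F^(p+q): the first p coordinates span V_0
   (even), the last q span V_1 (odd).  gl(V) = 'M_(p+q), acting by A *m y. *)
Section Omni.
Variables (F : fieldType) (p q : nat).
Local Notation n := (p + q)%N.
Local Notation Mat := 'M[F]_n.
Local Notation Vec := 'cV[F]_n.

Definition Elt := (Mat * Vec)%type.

Definition proj (b : bool) : Mat := if b then 1%:M - pid_mx p else pid_mx p.
Definition ssign (a b : bool) : F := if a && b then -1 else 1.
Definition vpart (b : bool) (x : Vec) : Vec := proj b *m x.
Definition mpart (b : bool) (A : Mat) : Mat :=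
  proj false *m A *m proj b + proj true *m A *m proj (~~ b).
Definition epart (b : bool) (e : Elt) : Elt := (mpart b e.1, vpart b e.2).

Definition scomm (A B : Mat) : Mat :=
  \sum_(a : bool) \sum_(b : bool)
     (mpart a A *m mpart b B - ssign a b *: (mpart b B *m mpart a A)).

(* omni-Lie superalgebra bracket and V-valued pairing, extended bilinearly *)
Definition obracket (e f : Elt) : Elt :=
  (scomm e.1 f.1,
   \sum_(a : bool) \sum_(b : bool)
     2^-1 *: (mpart a e.1 *m vpart b f.2 - ssign a b *: (mpart b f.1 *m vpart a e.2))).

Definition opairing (e f : Elt) : Vec :=
  \sum_(a : bool) \sum_(b : bool)
     2^-1 *: (mpart a e.1 *m vpart b f.2 + ssign a b *: (mpart b f.1 *m vpart a e.2)).

Definition subspaceE (L : Elt -> Prop) : Prop :=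
  L (0, 0) /\
  forall (c : F) (e f : Elt), L e -> L f -> L (c *: e.1 + f.1, c *: e.2 + f.2).
Definition gradedE (L : Elt -> Prop) : Prop :=
  subspaceE L /\ forall (b : bool) (e : Elt), L e -> L (epart b e).

Definition dirac (L : Elt -> Prop) : Prop :=
  gradedE L /\
  (forall e : Elt, L e <-> (forall f : Elt, L f -> opairing e f = 0)) /\
  (forall e f : Elt, L e -> L f -> L (obracket e f)).

Definition gradedV (W : Vec -> Prop) : Prop :=
  W 0 /\ (forall (c : F) (x y : Vec), W x -> W y -> W (c *: x + y)) /\
  (forall (b : bool) (x : Vec), W x -> W (vpart b x)).

Definition homog (b : bool) (x : Vec) : Prop := vpart b x = x.

(* Lie superalgebra structure on a graded subspace W (bracket given as a
   total function, only its values on W matter) *)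
Definition lie_super (W : Vec -> Prop) (br : Vec -> Vec -> Vec) : Prop :=
  (forall x y, W x -> W y -> W (br x y)) /\
  (forall (c : F) x y z, W x -> W y -> W z ->
     br (c *: x + y) z = c *: br x z + br y z /\
     br z (c *: x + y) = c *: br z x + br z y) /\
  (forall a b x y, W x -> W y -> homog a x -> homog b y ->
     homog (a (+) b) (br x y)) /\
  (forall a b x y, W x -> W y -> homog a x -> homog b y ->
     br x y = - (ssign a b *: br y x)) /\
  (forall a b c x y z, W x -> W y -> W z -> homog a x -> homog b y -> homog c z ->
     br x (br y z) = br (br x y) z + ssign a b *: br y (br x z)).

Definition WL (L : Elt -> Prop) (x : Vec) : Prop := exists A : Mat, L (A, x).

Definition diracOf (W : Vec -> Prop) (br : Vec -> Vec -> Vec) (e : Elt) : Prop :=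
  W e.2 /\ forall y : Vec, W y -> e.1 *m y = br e.2 y.

End Omni.

From Pilot Require Import Defs.
From HB Require Import structures.
From mathcomp Require Import all_boot all_order all_algebra.
From Stdlib Require Import Classical ClassicalEpsilon.
Import GRing.Theory.
Local Open Scope ring_scope.
Set Implicit Arguments. Unset Strict Implicit.

(* The bracket
   and pairing of E are defined in [Defs] componentwise on homogeneous parts;
   we first put them in closed form using the involution
   [twist B = B_0 + B_1 G] of gl(V) (G the grading operator):
     <A + x, B + y> = (A y + twist B x) / 2,
     [[A + x, B + y]] = [A, B] + (A y - twist B x) / 2.  Then
   - Dirac -> Lie: isotropy of L says twist B x = - A y, so L is closed under
     (A + x, B + y) |-> [A, B] + A y; the bracket [x, y]_L = A y is therefore
     well defined, and the Lie superalgebra axioms follow from closedness of L;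
   - injectivity: maximal isotropy makes L' contain any L with the same data;
   - Lie -> Dirac: [diracOf W br] is graded, isotropic (supersymmetry), closed
     under the bracket (super Jacobi) and coisotropic; the last step uses that a
     subspace of F^n can be separated from outside vectors by a matrix and that
     linear maps on it extend to matrices. *)

Section Grading.
Variables (F : fieldType) (p q : nat).
Local Notation n := (p + q)%N.
Local Notation Mat := 'M[F]_n.
Local Notation Vec := 'cV[F]_n.
Local Notation P := (proj F p q).
Local Notation s := (ssign F).
(* [/=] must not expand the projectors *)
Local Arguments proj : simpl never.

Lemma proj_mul b c : P b *m P c = if b == c then P c else 0.
Proof.
have pid_idem : (pid_mx p : Mat) *m (pid_mx p : Mat) = pid_mx p.
  by rewrite mul_pid_mx minnn (minn_idPr (leq_addr q p)).
rewrite /proj; case: b; case: c => /=;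
  by rewrite ?mulmxBl ?mulmxBr ?mul1mx ?mulmx1 ?pid_idem ?subrr ?subr0.
Qed.

Lemma proj_mulA b c k (M : 'M[F]_(n, k)) :
  P b *m (P c *m M) = if b == c then P c *m M else 0.
Proof. by rewrite mulmxA proj_mul; case: (b == c); rewrite ?mul0mx. Qed.

Lemma proj_sum : P false + P true = 1.
Proof. by rewrite /proj addrC subrK. Qed.

Lemma vpartK b c (x : Vec) : vpart b (vpart c x) = if b == c then vpart c x else 0.
Proof. by rewrite /vpart proj_mulA. Qed.

Lemma vpart_homog b (x : Vec) : homog b (vpart b x).
Proof. by rewrite /homog vpartK eqxx. Qed.

Lemma vpart_of_homog d e (x : Vec) :
  homog d x -> vpart e x = if e == d then x else 0.
Proof. by move=> <-; rewrite vpartK; case: (e == d). Qed.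

Lemma vpart_sum (x : Vec) : vpart false x + vpart true x = x.
Proof. by rewrite /vpart -mulmxDl proj_sum mul1mx. Qed.

Lemma vpartD b (x y : Vec) : vpart b (x + y) = vpart b x + vpart b y.
Proof. by rewrite /vpart mulmxDr. Qed.

Lemma mpart_vpart a b (A : Mat) (y : Vec) :
  mpart a A *m vpart b y = vpart (a (+) b) (A *m vpart b y).
Proof.
rewrite /mpart /vpart mulmxDl -!mulmxA.
by case: a; case: b; rewrite !proj_mulA /= ?mulmx0 ?addr0 ?add0r.
Qed.

Lemma mpartK a c (A : Mat) : mpart a (mpart c A) = if a == c then mpart c A else 0.
Proof.
(* keep [proj] folded: distributivity must not see its definition *)
rewrite /mpart; move: proj_mul (@proj_mulA); move: (proj F p q) => P' mulP mulPA.
rewrite !(mulmxDl, mulmxDr) -!mulmxA.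
case: a; case: c => /=; rewrite !mulPA /= ?mulmx0 ?addr0 ?add0r !mulmxA.
all: by rewrite -!mulmxA !mulP /= ?mulmx0 ?addr0 ?add0r.
Qed.

Lemma mpart_idem a (A : Mat) : mpart a (mpart a A) = mpart a A.
Proof. by rewrite mpartK eqxx. Qed.

Lemma mpart_sum (A : Mat) : mpart false A + mpart true A = A.
Proof.
rewrite /mpart /=; move: proj_sum; move: (proj F p q) => P' sumP.
transitivity ((P' false + P' true) *m A *m (P' false + P' true)).
  rewrite !(mulmxDl, mulmxDr) addrACA [RHS]addrACA; congr (_ + _); exact: addrC.
by rewrite sumP mul1mx mulmx1.
Qed.

Lemma mpartD b (A B : Mat) : mpart b (A + B) = mpart b A + mpart b B.
Proof.
rewrite /mpart; move: (proj F p q) => P'.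
by rewrite !(mulmxDl, mulmxDr) addrACA.
Qed.

Lemma mulmx_parts (A : Mat) (y : Vec) :
  \sum_a \sum_b mpart a A *m vpart b y = A *m y.
Proof.
under eq_bigr do rewrite -mulmx_sumr big_bool /= addrC vpart_sum.
by rewrite -mulmx_suml big_bool /= addrC mpart_sum.
Qed.

Definition grading : Mat := P false - P true.

Lemma proj_grading c : P c *m grading = s c true *: P c.
Proof.
by rewrite mulmxBr !proj_mul /ssign; case: c; rewrite /= ?subr0 ?sub0r ?scaleN1r ?scale1r.
Qed.

Lemma grading_proj c : grading *m P c = s c true *: P c.
Proof.
by rewrite mulmxBl !proj_mul /ssign; case: c; rewrite /= ?subr0 ?sub0r ?scaleN1r ?scale1r.
Qed.

Lemma grading_sq : grading *m grading = 1.
Proof. by rewrite {1}/grading mulmxBl !proj_grading /ssign /= scale1r scaleN1r opprK proj_sum. Qed.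

Lemma mpart_mulG b (M : Mat) : mpart b (M *m grading) = mpart b M *m grading.
Proof.
rewrite /mpart -!mulmxA !grading_proj (mulmxDl (P false *m _)) -!mulmxA.
by rewrite !proj_grading.
Qed.

(* [twist B] is the matrix of the signed action x |-> sum (-1)^{|x||B|} B x
   occurring in the second half of the pairing and of the bracket. *)
Definition twist (B : Mat) : Mat := mpart false B + mpart true B *m grading.

Lemma twist_mulE (B : Mat) (x : Vec) :
  twist B *m x = \sum_a \sum_b s a b *: (mpart b B *m vpart a x).
Proof.
rewrite exchange_big big_bool /= addrC /twist mulmxDl -mulmxA.
congr (_ + _); under eq_bigr do rewrite scalemxAr; rewrite -mulmx_sumr big_bool /ssign /=.
  by rewrite !scale1r addrC vpart_sum.
by rewrite scale1r scaleN1r /grading mulmxBl addrC.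
Qed.

Lemma twistK (B : Mat) : twist (twist B) = B.
Proof.
rewrite /twist !(mpartD _ (mpart false B)) !mpart_mulG !mpartK /=.
by rewrite mul0mx addr0 add0r -mulmxA grading_sq mulmx1 mpart_sum.
Qed.

Lemma ssignC a b : s a b = s b a.
Proof. by rewrite /ssign andbC. Qed.

Lemma ssignK a b k l (v : 'M[F]_(k, l)) : s a b *: (s a b *: v) = v.
Proof. by rewrite scalerA /ssign; case: (a && b); rewrite ?mulrNN mulr1 scale1r. Qed.

Lemma opairingE (e f : Elt F p q) :
  opairing e f = 2^-1 *: (e.1 *m f.2 + twist f.1 *m e.2).
Proof.
rewrite /opairing twist_mulE -mulmx_parts scalerDr !scaler_sumr -big_split /=.
apply: eq_bigr => a _; rewrite !scaler_sumr -big_split /=.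
by apply: eq_bigr => b _; rewrite scalerDr.
Qed.

Lemma obracketE (e f : Elt F p q) :
  obracket e f = (scomm e.1 f.1, 2^-1 *: (e.1 *m f.2 - twist f.1 *m e.2)).
Proof.
congr (_, _); rewrite twist_mulE -mulmx_parts scalerBr !scaler_sumr -sumrB /=.
apply: eq_bigr => a _; rewrite !scaler_sumr -sumrB /=.
by apply: eq_bigr => b _; rewrite scalerBr.
Qed.

Lemma twist_hom a b (B : Mat) (x : Vec) :
  mpart b B = B -> homog a x -> twist B *m x = s a b *: (B *m x).
Proof.
move=> <- <-; rewrite twist_mulE !big_bool /= !mpartK !vpartK.
by case: a; case: b => /=; rewrite ?mul0mx ?mulmx0 ?scaler0 ?addr0 ?add0r.
Qed.

Lemma scomm_hom a b (A B : Mat) :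
  mpart a A = A -> mpart b B = B -> scomm A B = A *m B - s a b *: (B *m A).
Proof.
move=> <- <-; rewrite /scomm !big_bool /= !mpartK.
by case: a; case: b => /=; rewrite ?mul0mx ?mulmx0 ?scaler0 ?subr0 ?addr0 ?add0r.
Qed.
End Grading.

Section Halving.
Variable F : fieldType.
Hypothesis two_neq0 : (2%:R : F) != 0.

Lemma scale_half_dbl k l (v : 'M[F]_(k, l)) : 2^-1 *: (v + v) = v.
Proof. by rewrite -mulr2n -scaler_nat scalerA mulVf // scale1r. Qed.

Lemma scale_half_eq0 k l (v : 'M[F]_(k, l)) : (2^-1 *: v == 0) = (v == 0).
Proof. by rewrite scaler_eq0 invr_eq0 (negbTE two_neq0). Qed.
End Halving.

Section Subspace.
Variables (F : fieldType) (n : nat).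
Local Notation Vec := 'cV[F]_n.
Variable W : Vec -> Prop.
Hypothesis W0 : W 0.
Hypothesis W_comb : forall (c : F) (x y : Vec), W x -> W y -> W (c *: x + y).

Lemma subspace_scale c x : W x -> W (c *: x).
Proof. by move=> Wx; have := W_comb c Wx W0; rewrite addr0. Qed.

Lemma subspace_add x y : W x -> W y -> W (x + y).
Proof. by move=> Wx Wy; have := W_comb 1 Wx Wy; rewrite scale1r. Qed.

Definition rows_in (S : 'M[F]_n) := forall u : 'rV_n, (u <= S)%MS -> W u^T.

Lemma rows_in_add S w : rows_in S -> W w -> rows_in (S + w^T)%MS.
Proof.
move=> SW Ww u /sub_addsmxP [[u1 u2] /= ->].
rewrite [u2]mx11_scalar mul_scalar_mx linearD linearZ /= trmxK addrC.
by apply: W_comb => //; apply: SW; exact: submxMl.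
Qed.

(* Grow a matrix inside [W] until it spans [W]; the rank bounds the process. *)
Lemma subspace_colspace : exists S : 'M[F]_n, forall w, W w <-> (w^T <= S)%MS.
Proof.
have grow k : exists S : 'M[F]_n,
    rows_in S /\ ((k <= \rank S)%N \/ forall w, W w -> (w^T <= S)%MS).
  elim: k => [|k [S [SW [rk_S | spanS]]]].
  - exists 0; split; last by left.
    by move=> u; rewrite submx0 => /eqP ->; rewrite trmx0.
  - case: (classic (exists w, W w /\ ~ (w^T <= S)%MS)) => [[w [Ww Sw]] | noW].
      exists (S + w^T)%MS; split; first exact: rows_in_add.
      left; apply: leq_ltn_trans rk_S _; apply: rank_ltmx; rewrite ltmxE addsmxSl /=.
      by apply/negP => /(submx_trans (addsmxSr S w^T)).
    exists S; split => //; right => w Ww.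
    by apply: NNPP => Sw; apply: noW; exists w.
  - by exists S; split => //; right.
have [S [SW [rk_S | spanS]]] := grow n.+1.
  by have := rank_leq_col S; rewrite leqNgt rk_S.
by exists S => w; split => [/spanS // | /SW]; rewrite trmxK.
Qed.

Lemma subspace_separation x : ~ W x ->
  exists B : 'M[F]_n, (forall w, W w -> B *m w = 0) /\ B *m x != 0.
Proof.
have [S HS] := subspace_colspace; move=> Wx; exists (cokermx S)^T; split.
  move=> w /HS; rewrite submxE => /eqP ker_w.
  by rewrite -[w]trmxK -trmx_mul ker_w trmx0.
rewrite -[x]trmxK -trmx_mul trmx_eq0 -submxE.
by apply/negP => /HS.
Qed.

Lemma linear_on_sum (g : Vec -> Vec) (I : finType) (c : I -> F) (w : I -> Vec) :
  (forall c x y, W x -> W y -> g (c *: x + y) = c *: g x + g y) ->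
  (forall i, W (w i)) ->
  W (\sum_i c i *: w i) /\ g (\sum_i c i *: w i) = \sum_i c i *: g (w i).
Proof.
move=> g_lin Ww.
have g0 : g 0 = 0.
  by apply: (addrI (g 0)); rewrite addr0 -{1}(scale1r (g 0)) -g_lin // scale1r addr0.
apply: (big_ind2 (fun v gv => W v /\ g v = gv)) => [//||i _].
  move=> u gu v gv [Wu <-] [Wv <-]; split; first exact: subspace_add.
  by rewrite -{1}(scale1r u) g_lin // scale1r.
by split; [exact: subspace_scale | rewrite -[_ *: _]addr0 g_lin // g0 addr0].
Qed.

Lemma subspace_extension (g : Vec -> Vec) :
  (forall c x y, W x -> W y -> g (c *: x + y) = c *: g x + g y) ->
  exists C : 'M[F]_n, forall z, W z -> C *m z = g z.
Proof.
move=> g_lin; have [S HS] := subspace_colspace.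
have W_row i : W (row i S)^T by apply/HS; rewrite trmxK row_sub.
pose G : 'M[F]_n := \matrix_(i, j) (g (row i S)^T) j 0.
have row_G i : row i G = (g (row i S)^T)^T by apply/rowP => j; rewrite !mxE.
exists (pinvmx S *m G)^T => z Wz.
set u := z^T *m pinvmx S.
have z_comb : z = \sum_i u 0 i *: (row i S)^T.
  rewrite -[LHS]trmxK -(mulmxKpV (proj1 (HS z) Wz)) -/u mulmx_sum_row linear_sum.
  by apply: eq_bigr => i _; rewrite linearZ.
rewrite -[z in LHS]trmxK -trmx_mul mulmxA -/u mulmx_sum_row linear_sum.
rewrite [in RHS]z_comb (proj2 (linear_on_sum (u 0) g_lin W_row)).
by apply: eq_bigr => i _; rewrite row_G linearZ /= trmxK.
Qed.
End Subspace.

Section DiracToLie.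
Variables (F : fieldType) (p q : nat).
Hypothesis two_neq0 : (2%:R : F) != 0.
Local Notation n := (p + q)%N.
Local Notation Vec := 'cV[F]_n.
Local Notation s := (ssign F).
Variable L : Elt F p q -> Prop.
Hypothesis L_dirac : dirac L.

Lemma L_zero : L (0, 0).
Proof. by case: L_dirac => [[[]]]. Qed.

Lemma L_comb c e f : L e -> L f -> L (c *: e.1 + f.1, c *: e.2 + f.2).
Proof. by case: L_dirac => [[[_ L_comb] _] _]; apply: L_comb. Qed.

Lemma L_part b e : L e -> L (epart b e).
Proof. by case: L_dirac => [[_ L_part] _]; apply: L_part. Qed.

Lemma L_obracket e f : L e -> L f -> L (obracket e f).
Proof. by case: L_dirac => [_ [_ L_br]]; apply: L_br. Qed.

(* Isotropy of L, read off from the closed form of the pairing. *)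
Lemma L_twist A B x y : L (A, x) -> L (B, y) -> twist B *m x = - (A *m y).
Proof.
move=> LAx LBy; case: L_dirac => [_ [L_perp _]].
move/L_perp/(_ _ LBy)/eqP: LAx; rewrite opairingE scale_half_eq0 // addrC addr_eq0.
exact: eqP.
Qed.

Lemma L_annihilates C y : L (C, 0) -> WL L y -> C *m y = 0.
Proof.
move=> LC [B LBy]; have /eqP := L_twist LC LBy.
by rewrite mulmx0 eq_sym oppr_eq0 => /eqP.
Qed.

Lemma L_sub A A' x : L (A, x) -> L (A', x) -> L (A - A', 0).
Proof.
move=> LAx LA'x; have := L_comb (-1) LA'x LAx.
by rewrite /= !scaleN1r addNr addrC.
Qed.

Lemma L_welldef x y A A' : WL L y -> L (A, x) -> L (A', x) -> A *m y = A' *m y.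
Proof.
move=> WLy LAx LA'x; apply/eqP; rewrite -subr_eq0 -mulmxBl.
by rewrite (L_annihilates (L_sub LAx LA'x) WLy).
Qed.

(* By isotropy, the vector part of the omni-Lie bracket is A y: L is closed
   under (A + x, B + y) |-> [A, B] + A y. *)
Lemma L_scomm A B x y : L (A, x) -> L (B, y) -> L (scomm A B, A *m y).
Proof.
move=> LAx LBy; have := L_obracket LAx LBy.
by rewrite obracketE /= (L_twist LAx LBy) opprK scale_half_dbl.
Qed.

Lemma L_hom_rep a A x : L (A, x) -> homog a x -> L (mpart a A, x).
Proof. by move=> LAx hx; have := L_part a LAx; rewrite /epart /= hx. Qed.

Definition brL (x y : Vec) : Vec :=
  epsilon (inhabits 0) (fun A => L (A, x)) *m y.

Lemma brLE x y A : L (A, x) -> WL L y -> brL x y = A *m y.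
Proof.
move=> LAx WLy; apply: (L_welldef WLy _ LAx).
by apply: (epsilon_spec (inhabits 0) (fun A => L (A, x))); exists A.
Qed.

Lemma WL_graded : gradedV (WL L).
Proof.
split; first by exists 0; exact: L_zero.
split; first by move=> c x y [A LAx] [B LBy]; exists (c *: A + B); exact: (L_comb c LAx LBy).
by move=> b x [A LAx]; exists (mpart b A); exact: (L_part b LAx).
Qed.

Lemma brL_closed x y : WL L x -> WL L y -> WL L (brL x y).
Proof.
move=> [A LAx] [B LBy]; rewrite (brLE LAx); last by exists B.
by exists (scomm A B); exact: (L_scomm LAx LBy).
Qed.

Lemma brL_linear c x y z : WL L x -> WL L y -> WL L z ->
  brL (c *: x + y) z = c *: brL x z + brL y z /\
  brL z (c *: x + y) = c *: brL z x + brL z y.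
Proof.
move=> [A LAx] [B LBy] [C LCz]; have [_ [W_comb _]] := WL_graded.
have WLx : WL L x by exists A.
have WLy : WL L y by exists B.
have WLz : WL L z by exists C.
rewrite (brLE (L_comb c LAx LBy) WLz) (brLE LAx WLz) (brLE LBy WLz) /=.
rewrite (brLE LCz (W_comb c x y WLx WLy)) (brLE LCz WLx) (brLE LCz WLy).
by rewrite mulmxDl mulmxDr -scalemxAl -scalemxAr.
Qed.

Lemma brL_parity a b x y : WL L x -> WL L y -> homog a x -> homog b y ->
  homog (a (+) b) (brL x y).
Proof.
move=> [A LAx] WLy hx hy; rewrite (brLE (L_hom_rep LAx hx) WLy) /homog -hy.
by rewrite mpart_vpart vpartK eqxx.
Qed.

Lemma brL_antisym a b x y : WL L x -> WL L y -> homog a x -> homog b y ->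
  brL x y = - (s a b *: brL y x).
Proof.
move=> [A LAx] [B LBy] hx hy.
have LAx' := L_hom_rep LAx hx; have LBy' := L_hom_rep LBy hy.
rewrite (brLE LAx'); last by exists B.
rewrite (brLE LBy'); last by exists A.
by rewrite -(twist_hom (mpart_idem _ _) hx) (L_twist LAx' LBy') opprK.
Qed.

Lemma brL_jacobi a b c x y z : WL L x -> WL L y -> WL L z ->
  homog a x -> homog b y -> homog c z ->
  brL x (brL y z) = brL (brL x y) z + s a b *: brL y (brL x z).
Proof.
move=> [A LAx] [B LBy] [C LCz] hx hy _.
have LAx' := L_hom_rep LAx hx; have LBy' := L_hom_rep LBy hy.
have WLz : WL L z by exists C.
rewrite [brL x y](brLE LAx'); last by exists B.
rewrite (brLE (L_scomm LAx' LBy') WLz) (brLE LBy' WLz) (brLE LAx' WLz).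
rewrite (brLE LAx'); last by exists (scomm (mpart b B) C); exact: (L_scomm LBy' LCz).
rewrite (brLE LBy'); last by exists (scomm (mpart a A) C); exact: (L_scomm LAx' LCz).
rewrite (scomm_hom (mpart_idem _ _) (mpart_idem _ _)).
by rewrite mulmxBl -scalemxAl -!mulmxA subrK.
Qed.

Lemma WL_lie : lie_super (WL L) brL.
Proof.
split; first exact: brL_closed.
split; first exact: brL_linear.
split; first exact: brL_parity.
split; first exact: brL_antisym.
exact: brL_jacobi.
Qed.
End DiracToLie.

(* A Dirac structure L' contains every L with the same W and the same bracket:
   for A + x in L pick A' + x in L'; then (A - A') + 0 is orthogonal to L',
   hence lies in L', and so does A + x = (A - A') + (A' + x). *)
Lemma dirac_incl (F : fieldType) (p q : nat) (L L' : Elt F p q -> Prop) :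
  dirac L' -> (forall x, WL L x <-> WL L' x) ->
  (forall x y A A', WL L y -> L (A, x) -> L' (A', x) -> A *m y = A' *m y) ->
  forall e, L e -> L' e.
Proof.
move=> [[[_ L'_comb] _] [L'_perp _]] sameW agree [A x] LAx.
have [A' L'A'x] := proj1 (sameW x) (ex_intro _ A LAx).
have L'diff : L' (A - A', 0).
  apply/L'_perp => -[B y] L'By; rewrite opairingE /= mulmxBl.
  rewrite (agree x y A A') ?subrr ?mulmx0 ?add0r ?scaler0 //.
  by apply/sameW; exists B.
by have := L'_comb 1 _ _ L'diff L'A'x; rewrite /= !scale1r add0r subrK.
Qed.

Section LieToDirac.
Variables (F : fieldType) (p q : nat).
Hypothesis two_neq0 : (2%:R : F) != 0.
Local Notation n := (p + q)%N.
Local Notation Vec := 'cV[F]_n.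
Local Notation s := (ssign F).
Variables (W : Vec -> Prop) (br : Vec -> Vec -> Vec).
Hypothesis W_graded : gradedV W.
Hypothesis W_lie : lie_super W br.

Lemma W0 : W 0. Proof. by case: W_graded. Qed.
Lemma W_comb c x y : W x -> W y -> W (c *: x + y).
Proof. by case: W_graded => _ [W_comb _]; apply: W_comb. Qed.
Lemma W_part b x : W x -> W (vpart b x).
Proof. by case: W_graded => _ [_ W_part]; apply: W_part. Qed.
Lemma br_closed x y : W x -> W y -> W (br x y).
Proof. by case: W_lie => br_closed _; apply: br_closed. Qed.
Lemma br_linear c x y z : W x -> W y -> W z ->
  br (c *: x + y) z = c *: br x z + br y z /\ br z (c *: x + y) = c *: br z x + br z y.
Proof. by case: W_lie => _ [br_lin _]; apply: br_lin. Qed.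
Lemma br_parity a b x y : W x -> W y -> homog a x -> homog b y ->
  homog (a (+) b) (br x y).
Proof. by case: W_lie => _ [_ [br_par _]]; apply: br_par. Qed.
Lemma br_antisym a b x y : W x -> W y -> homog a x -> homog b y ->
  br x y = - (s a b *: br y x).
Proof. by case: W_lie => _ [_ [_ [br_anti _]]]; apply: br_anti. Qed.
Lemma br_jacobi a b c x y z : W x -> W y -> W z -> homog a x -> homog b y -> homog c z ->
  br x (br y z) = br (br x y) z + s a b *: br y (br x z).
Proof. by case: W_lie => _ [_ [_ [_ br_jac]]]; apply: br_jac. Qed.

Lemma br_addl x y z : W x -> W y -> W z -> br (x + y) z = br x z + br y z.
Proof. by move=> Wx Wy Wz; have [] := br_linear 1 Wx Wy Wz; rewrite !scale1r. Qed.

Lemma br_addr x y z : W x -> W y -> W z -> br z (x + y) = br z x + br z y.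
Proof. by move=> Wx Wy Wz; have [_] := br_linear 1 Wx Wy Wz; rewrite !scale1r. Qed.

Lemma br0l z : W z -> br 0 z = 0.
Proof.
move=> Wz; apply: (addrI (br 0 z)).
by rewrite -br_addl ?addr0 //; exact: W0.
Qed.

Lemma br_partl x z : W x -> W z -> \sum_a br (vpart a x) z = br x z.
Proof. by move=> Wx Wz; rewrite big_bool /= -br_addl 1?addrC ?vpart_sum //; apply: W_part. Qed.

Lemma br_partr x z : W x -> W z -> \sum_a br x (vpart a z) = br x z.
Proof. by move=> Wx Wz; rewrite big_bool /= -br_addr 1?addrC ?vpart_sum //; apply: W_part. Qed.

Lemma br_parts x y : W x -> W y ->
  \sum_a \sum_b br (vpart a x) (vpart b y) = br x y.
Proof.
move=> Wx Wy; rewrite -br_partl //; apply: eq_bigr => a _.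
by rewrite br_partr //; apply: W_part.
Qed.

Local Notation D := (diracOf W br).

Lemma D_part_mul A x y a c : D (A, x) -> W y ->
  mpart a A *m vpart c y = br (vpart a x) (vpart c y).
Proof.
move=> [/= Wx HA] Wy; have Wyc := W_part c Wy.
rewrite mpart_vpart (HA _ Wyc) -(br_partl Wx Wyc) big_bool /= vpartD.
have hom_part d := br_parity (W_part d Wx) Wyc (vpart_homog d x) (vpart_homog c y).
rewrite !(vpart_of_homog _ (hom_part _)).
by case: a; case: c {Wyc hom_part}; rewrite /= ?addr0 ?add0r.
Qed.

Lemma D_part_mull A x y a : D (A, x) -> W y -> mpart a A *m y = br (vpart a x) y.
Proof.
move=> DAx Wy; rewrite -(br_partr _ Wy); last by apply: W_part; case: DAx.
by rewrite big_bool /= -{1}(vpart_sum y) mulmxDr addrC !(D_part_mul _ _ DAx Wy).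
Qed.

Lemma D_graded : gradedE D.
Proof.
split; first split.
- by split; [exact: W0 | move=> y Wy; rewrite /= mul0mx br0l].
- move=> c [A x] [B y] [/= Wx HA] [/= Wy HB]; split => /=; first exact: W_comb.
  by move=> z Wz; rewrite mulmxDl -scalemxAl HA // HB // (proj1 (br_linear c Wx Wy Wz)).
move=> b [A x] DAx; split => /=; first by apply: W_part; case: DAx.
by move=> y Wy; exact: D_part_mull.
Qed.

Lemma D_twist B x y : D (B, y) -> W x -> twist B *m x = - br x y.
Proof.
move=> DBy Wx; have Wy : W y by case: DBy.
rewrite twist_mulE -(br_parts Wx Wy) -sumrN; apply: eq_bigr => a _.
rewrite -sumrN; apply: eq_bigr => b _; rewrite (D_part_mul _ _ DBy Wx).
rewrite (br_antisym (W_part _ Wy) (W_part _ Wx) (vpart_homog _ _) (vpart_homog _ _)).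
by rewrite scalerN ssignC ssignK.
Qed.

(* D is isotropic: <A + x, B + y> = ([x, y] - [x, y]) / 2 *)
Lemma D_isotropic e f : D e -> D f -> opairing e f = 0.
Proof.
case: e f => A x [B y] DAx DBy; have Wy : W y by case: DBy.
have [Wx HA] := DAx.
by rewrite opairingE /= (D_twist DBy Wx) HA // subrr scaler0.
Qed.

(* Every y in W has a lift B + y in D: extend the linear map [y, .] on W. *)
Lemma D_lift y : W y -> exists B, D (B, y).
Proof.
move=> Wy; have [B HB] := subspace_extension W0 W_comb (fun c x z Wx Wz =>
  proj2 (br_linear c Wx Wz Wy)).
by exists B; split.
Qed.

Lemma WL_diracOf x : WL D x <-> W x.
Proof. by split; [case=> A [] | exact: D_lift]. Qed.

(* since [W] is graded, [twist] preserves the annihilator of [W] *)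
Lemma twist_annihilates B : (forall w, W w -> B *m w = 0) ->
  forall w, W w -> twist B *m w = 0.
Proof.
move=> B_W w Ww; rewrite twist_mulE big1 // => a _; rewrite big1 // => b _.
by rewrite mpart_vpart B_W ?/vpart ?mulmx0 ?scaler0 //; apply: W_part.
Qed.

(* If x were not in W, a matrix B0 killing W but not x gives
   twist B0 + 0 in D with pairing B0 x / 2 != 0 against A + x; once x is in W,
   pairing against a lift C + y of y in W gives A y = [x, y]. *)
Lemma D_coisotropic A x : (forall f, D f -> opairing (A, x) f = 0) -> D (A, x).
Proof.
move=> Ax_perp.
have Wx : W x.
  apply: NNPP => Wx; have [B0 [B0_W B0x]] := subspace_separation W0 W_comb Wx.
  have D_B : D (twist B0, 0).
    by split=> [|y Wy]; [exact: W0 | rewrite /= br0l // twist_annihilates].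
  move/eqP: (Ax_perp _ D_B); rewrite opairingE /= mulmx0 add0r twistK.
  by rewrite scale_half_eq0 // (negbTE B0x).
split => //= y Wy; have [C DCy] := D_lift Wy.
move/eqP: (Ax_perp _ DCy); rewrite opairingE /= (D_twist DCy Wx).
by rewrite scale_half_eq0 // subr_eq0 => /eqP.
Qed.

Lemma br_jacobi_l a b x y z : W x -> W y -> W z -> homog a x -> homog b y ->
  br (br x y) z = br x (br y z) - s a b *: br y (br x z).
Proof.
move=> Wx Wy Wz hx hy; have Wz0 := W_part false Wz; have Wz1 := W_part true Wz.
rewrite -(vpart_sum z) !br_addr //; try by apply: br_closed.
rewrite !(br_jacobi Wx Wy _ hx hy (vpart_homog _ _)) //.
by rewrite scalerDr addrACA addrK.
Qed.

Lemma br_suml (u : bool -> Vec) z : (forall b, W (u b)) -> W z ->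
  br (\sum_b u b) z = \sum_b br (u b) z.
Proof. by move=> Wu Wz; rewrite !big_bool /= br_addl. Qed.

Lemma br_br_parts x y z : W x -> W y -> W z ->
  \sum_a \sum_b br (br (vpart a x) (vpart b y)) z = br (br x y) z.
Proof.
move=> Wx Wy Wz; transitivity (\sum_a br (br (vpart a x) y) z).
  apply: eq_bigr => a _; rewrite -(br_partr (W_part a Wx) Wy) br_suml //.
  by move=> b; apply: br_closed; apply: W_part.
rewrite -br_suml ?br_partl // => a.
by apply: br_closed => //; apply: W_part.
Qed.

(* D is closed under the omni-Lie bracket: its vector part is [x, y] by
   isotropy, and its gl(V) part [A, B] acts as [[x, y], .] by super Jacobi. *)
Lemma D_obracket e f : D e -> D f -> D (obracket e f).
Proof.
case: e f => A x [B y] DAx DBy; have Wx : W x by case: DAx.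
have Wy : W y by case: DBy.
rewrite obracketE /= (D_twist DBy Wx) opprK (proj2 DAx y Wy) scale_half_dbl //.
split => /=; first exact: br_closed.
move=> z Wz; rewrite /scomm mulmx_suml.
transitivity (\sum_a \sum_b br (br (vpart a x) (vpart b y)) z).
  apply: eq_bigr => a _; rewrite mulmx_suml; apply: eq_bigr => b _.
  have Wxa := W_part a Wx; have Wyb := W_part b Wy.
  rewrite mulmxBl -scalemxAl -!mulmxA !(D_part_mull _ DBy Wz) !(D_part_mull _ DAx Wz).
  rewrite (D_part_mull _ DAx (br_closed Wyb Wz)) (D_part_mull _ DBy (br_closed Wxa Wz)).
  by rewrite (br_jacobi_l Wxa Wyb Wz (vpart_homog _ _) (vpart_homog _ _)).
exact: br_br_parts.
Qed.

Lemma diracOf_dirac : dirac D.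
Proof.
split; first exact: D_graded.
split; last exact: D_obracket.
by move=> [A x]; split=> [DAx f Df | ]; [exact: D_isotropic | exact: D_coisotropic].
Qed.
End LieToDirac.

Theorem mainTheorem6 (F : fieldType) (p q : nat) :
  [pchar F] =i pred0 ->
  (* (1) for a Dirac structure L: W_L graded subspace, [.,.]_L well defined,
     W_L-valued, and a Lie superalgebra *)
  (forall L : Elt F p q -> Prop, @dirac F p q L ->
     @gradedV F p q (@WL F p q L) /\
     (forall (x y : 'cV[F]_(p + q)) (A A' : 'M[F]_(p + q)),
        @WL F p q L y -> L (A, x) -> L (A', x) -> A *m y = A' *m y) /\
     exists br : 'cV[F]_(p + q) -> 'cV[F]_(p + q) -> 'cV[F]_(p + q),
       (forall x y A, L (A, x) -> @WL F p q L y -> br x y = A *m y) /\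
       @lie_super F p q (@WL F p q L) br) /\
  (* (2) injectivity of L |-> (W_L, [.,.]_L) *)
  (forall L L' : Elt F p q -> Prop, @dirac F p q L -> @dirac F p q L' ->
     (forall x, @WL F p q L x <-> @WL F p q L' x) ->
     (forall x y A A', @WL F p q L y -> L (A, x) -> L' (A', x) -> A *m y = A' *m y) ->
     forall e, L e <-> L' e) /\
  (* (3) surjectivity, with the explicit inverse *)
  (forall (W : 'cV[F]_(p + q) -> Prop) (br : 'cV[F]_(p + q) -> 'cV[F]_(p + q) -> 'cV[F]_(p + q)),
     @gradedV F p q W -> @lie_super F p q W br ->
     @dirac F p q (@diracOf F p q W br) /\
     (forall x, @WL F p q (@diracOf F p q W br) x <-> W x) /\
     (forall x y A, @diracOf F p q W br (A, x) -> W y -> A *m y = br x y)).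
Proof.
move=> char0; have two_neq0 : (2%:R : F) != 0 by move/pcharf0P: char0 => ->.
split.
  move=> L L_dirac; split; first exact: WL_graded.
  split; first by move=> x y A A'; exact: L_welldef.
  exists (brL L); split; first by move=> x y A LAx WLy; exact: brLE.
  exact: WL_lie.
split.
  move=> L L' L_dirac L'_dirac sameW agree e; split; first exact: dirac_incl.
  apply: dirac_incl => // [x | x y A A' WLy L'Ax LA'x]; first by symmetry.
  by symmetry; apply: agree LA'x L'Ax; apply/sameW.
move=> W br W_graded W_lie; split; first exact: diracOf_dirac.
by split; [exact: WL_diracOf | move=> x y A [_ HA] Wy; exact: HA].
Qed.
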